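(* Let $g\ge1$ and $n\ge3$. \begin{enumerate} \item For all $1\le r\le n$: $r^r\,t_{g,n-r+1}^{r+1}\le t_{g,n}^2$, with equality iff $r=1$. \item If $(n,g)\neq(3,1)$, then for all $1\le r\le n-1$: $(r+1)^r\,t_{g,n-r}^{r+1}\le 2t_{g,n-1}^2$, with equality iff $r=1$ or $(g,r,n)\in\{(1,2,4),(2,2,3)\}$. \item If $(n,g)\notin\{(4,1),(4,2),(5,1)\}$, then for all $1\le r\le n-2$: $(r+2)^r\,t_{g,n-r-1}^{r+1}\le 3t_{g,n-2}^2$, with equality iff $r=1$ or $(g,r,n)=(3,2,4)$. \end{enumerate}
   Context: Sylvester sequences: $s_{g,1}=g+1$, $s_{g,k+1}=s_{g,k}(s_{g,k}-1)+1$, $t_{g,k}=s_{g,k}-1$. *)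

From mathcomp Require Import all_boot.
(* Sylvester sequences: s_{g,1} = g+1, s_{g,k+1} = s_{g,k}(s_{g,k}-1)+1,
   t_{g,k} = s_{g,k} - 1.  Indexed from k = 1; sylv_s g 0 is a junk value
   (equal to sylv_s g 1) never used in the statement. *)
Definition sylv_step (x : nat) : nat := x * (x - 1) + 1.
Definition sylv_s (g k : nat) : nat := iter k.-1 sylv_step g.+1.
Definition sylv_t (g k : nat) : nat := sylv_s g k - 1.

From mathcomp Require Import all_boot zify ring.

(* Shifting indices, t_{g,k+1} = t_{g,k} (t_{g,k} + 1), so
   t_{g,m+j} is the j-th iterate of the "pronic" map y |-> y (y + 1) started
   at x = t_{g,m}.  Writing r = j + 1 and c in {1, 2, 3} for the three parts,
   every inequality of the lemma reads
        (c + j)^(j+1) * x^(j+2) <= c * P_j(x)^2,     P_j := j-th pronic iterate.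
   We first study this inequality for an arbitrary start x >= 1:
   - j = 0 is an identity;
   - j = 1 holds iff c <= x, with equality iff x = c (the gap factors as
     x^2 (c x - 1) (x - c));
   - j = 2 is strict except for c = 3, x = 1;
   - j >= 3 is strict, because P_j(x)^2 >= x^(j+2) P_j(1)^2 and P_j(1)
     (= 1, 2, 6, 42, ...) grows doubly exponentially.
   Then we transport this to Sylvester sequences (lemma sylv_bound) and, in
   one lemma per part, read off from the small values t_{g,1} = g,
   t_{1,2} = 2 and t_{g,k} >= 6 otherwise which pairs (g, n) violate the side
   conditions and where equality occurs. *)

Definition pronic (y : nat) : nat := y * y.+1.

Definition pronic_iter (x j : nat) : nat := iter j pronic x.

Lemma pronic_iterS x j : pronic_iter x j.+1 = pronic (pronic_iter x j).
Proof. by []. Qed.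

Lemma pronic_iter_ge x j : x <= pronic_iter x j.
Proof. by elim: j => // j IH; rewrite pronic_iterS /pronic; nia. Qed.

Lemma pronic_iter_supermul x j : 1 <= x -> x * pronic_iter 1 j <= pronic_iter x j.
Proof.
move=> hx; elim: j => [|j IH]; first by rewrite muln1.
have hw : 1 <= pronic_iter 1 j by apply: pronic_iter_ge.
rewrite !pronic_iterS /pronic; nia.
Qed.

Lemma pronic_iter_sq_lb x j :
  1 <= x -> x ^ j.+2 * pronic_iter 1 j ^ 2 <= pronic_iter x j ^ 2.
Proof.
move=> hx; elim: j => [|j IH]; first by rewrite /= !muln1.
have hxw := pronic_iter_supermul x j hx.
have hw : 1 <= pronic_iter 1 j by apply: pronic_iter_ge.
rewrite !pronic_iterS /pronic.
set w := pronic_iter 1 j in IH hxw hw *; set t := pronic_iter x j in IH hxw *.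
have step : x * w.+1 ^ 2 <= t.+1 ^ 2.
  have h : x * w.+1 ^ 2 <= (x * w).+1 ^ 2.
    by clear IH hxw; nia.
  by apply: (leq_trans h); rewrite leq_exp2r //; lia.
have -> : x ^ j.+3 * (w * w.+1) ^ 2 = (x ^ j.+2 * w ^ 2) * (x * w.+1 ^ 2).
  by rewrite expnS !expnMn; ring.
by rewrite expnMn; apply: leq_mul.
Qed.

Lemma pronic_iter_one_large k : (k + 6) ^ (k + 4) < pronic_iter 1 (k + 3) ^ 2.
Proof.
elim: k => [|k IH]; first by [].
have pow2_ge : k + 7 <= 2 ^ (k + 4).
  by elim: k {IH} => // k IH; rewrite !addSn expnS; lia.
rewrite !addSn pronic_iterS /pronic.
set w := pronic_iter 1 (k + 3) in IH *.
have square : (k + 6).+1 ^ (k + 4).+1 <= ((k + 6) ^ (k + 4)) ^ 2.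
  rewrite -expnM mulnC expnM expnS.
  apply: (@leq_trans ((2 * (k + 6).+1) ^ (k + 4))).
    by rewrite expnMn leq_mul //; lia.
  by rewrite leq_exp2r //; lia.
apply: (leq_ltn_trans square); apply: (@leq_trans ((w ^ 2) ^ 2)).
  by rewrite ltn_exp2r.
by rewrite leq_exp2r //; nia.
Qed.

Lemma pronic_iter_large x j :
  1 <= x -> 3 <= j -> (j + 3) ^ j.+1 * x ^ j.+2 < pronic_iter x j ^ 2.
Proof.
move=> hx hj; have [k ->] : exists k, j = k + 3 by exists (j - 3); lia.
apply: leq_trans (pronic_iter_sq_lb x (k + 3) hx).
rewrite mulnC ltn_mul2l expn_gt0 hx /=.
apply: leq_ltn_trans (pronic_iter_one_large k).
by rewrite (_ : (k + 3).+1 = k + 4) ?leq_exp2r //; lia.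
Qed.

(* The case j = 1: for c <= x the gap equals x^2 (c x - 1) (x - c). *)
Lemma pronic_bound_step1 c x : 1 <= c -> c <= x ->
  c.+1 ^ 2 * x ^ 3 <= c * pronic x ^ 2 /\
  (c.+1 ^ 2 * x ^ 3 = c * pronic x ^ 2 <-> x = c).
Proof.
case: c => [//|e] _ hcx; rewrite /pronic -(subnKC hcx).
set d := x - e.+1; set y := e.+1 + d.
have gap : e.+1 * (y * y.+1) ^ 2 = e.+2 ^ 2 * y ^ 3 + y ^ 2 * d * (e * y + e + d).
  by rewrite /y; ring.
rewrite gap; split; first exact: leq_addr.
rewrite -[X in X = _ <-> _]addn0; split.
  by move/addnI/esym/eqP; rewrite !muln_eq0; lia.
by move=> hy; rewrite (_ : d = 0) ?muln0 ?mul0n //; lia.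
Qed.

Lemma pronic_bound_step2 c x : 1 <= c <= 3 -> 1 <= x -> (x = 1 -> c <= 2) ->
  (c + 2) ^ 3 * x ^ 4 < c * pronic_iter x 2 ^ 2.
Proof.
move=> /andP [hc1 hc3] hx hx1; have [ex|hx2] : x = 1 \/ 2 <= x by lia.
  by subst x; move: hc1 hc3 (hx1 erefl); clear hx1; case: c => [|[|[|]]].
rewrite !pronic_iterS /pronic -mulnA.
set u := x.+1 * (x * x.+1).+1.
have hu : 7 * x <= u.
  have : 3 * x <= (x * x.+1).+1 by nia.
  by rewrite /u; nia.
have hxu : x ^ 4 * 49 <= (x * u) ^ 2.
  rewrite (_ : x ^ 4 * 49 = (x * (7 * x)) ^ 2); last by ring.
  by rewrite leq_exp2r // leq_mul2l hu orbT.
apply: (@leq_trans (c * (x ^ 4 * 49))); last by rewrite leq_mul2l hxu orbT.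
rewrite mulnCA mulnC ltn_mul2l expn_gt0 hx /=.
by case: c hc1 hc3 {hx1} => [|[|[|[|]]]].
Qed.

(* The pronic inequality for an arbitrary start x >= 1 and c in {1, 2, 3},
   under the side conditions coming from the cases j = 1 and j = 2. *)
Lemma pronic_bound c x j : 1 <= c <= 3 -> 1 <= x ->
  (j = 1 -> c <= x) -> (j = 2 -> x = 1 -> c <= 2) ->
  (c + j) ^ j.+1 * x ^ j.+2 <= c * pronic_iter x j ^ 2 /\
  ((c + j) ^ j.+1 * x ^ j.+2 = c * pronic_iter x j ^ 2 <->
     j = 0 \/ (j = 1 /\ x = c)).
Proof.
move=> hc hx h1 h2.
have strict a b (P : Prop) : a < b -> ~ P -> a <= b /\ (a = b <-> P).
  by move=> hab nP; split; [exact: ltnW | split=> // e; move: hab; rewrite e ltnn].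
case: j h1 h2 => [|[|[|j]]] h1 h2.
- by rewrite addn0 expn1 mulnA; split => //; tauto.
- have [hle heq] := pronic_bound_step1 c x (proj1 (andP hc)) (h1 erefl).
  by rewrite addn1; split => //; rewrite heq; lia.
- by apply: strict; [exact: pronic_bound_step2 c x hc hx (h2 erefl) | lia].
- apply: strict; last lia.
  apply: (@leq_ltn_trans ((j.+3 + 3) ^ j.+4 * x ^ j.+3.+2)).
    by rewrite leq_mul2r leq_exp2r ?orbT //; lia.
  apply: (leq_trans (pronic_iter_large x j.+3 hx isT)).
  by rewrite leq_pmull //; case/andP: hc.
Qed.

Lemma sylv_t_succ g k : 1 <= k -> sylv_t g k.+1 = pronic (sylv_t g k).
Proof.
case: k => // k _; rewrite /sylv_t /sylv_s /= /sylv_step /pronic.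
set s := iter k sylv_step g.+1.
have hs : 0 < s by rewrite /s; case: (k) => [|i] //=; rewrite /sylv_step addn1.
by case: s hs => // s _; rewrite addnK subn1 /= mulnC.
Qed.

Lemma sylv_t_one g : sylv_t g 1 = g.
Proof. by rewrite /sylv_t /sylv_s /= subn1. Qed.

Lemma sylv_t_shift g m j : 1 <= m -> sylv_t g (m + j) = pronic_iter (sylv_t g m) j.
Proof.
move=> hm; elim: j => [|j IH]; first by rewrite addn0.
by rewrite addnS sylv_t_succ ?IH //; lia.
Qed.

Lemma sylv_t_ge g k : g <= sylv_t g k.
Proof.
case: k => [|k]; first by rewrite /sylv_t /sylv_s /= subn1.
by rewrite -add1n sylv_t_shift // sylv_t_one; apply: pronic_iter_ge.
Qed.

Lemma sylv_t_cases g k : 1 <= g -> 1 <= k ->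
  (k = 1 /\ sylv_t g k = g) \/ (k = 2 /\ g = 1 /\ sylv_t g k = 2) \/
  (2 <= k /\ ~ (k = 2 /\ g = 1) /\ 6 <= sylv_t g k).
Proof.
move=> hg hk; have [->|[->|hk3]] : k = 1 \/ k = 2 \/ 3 <= k by lia.
- by left; rewrite sylv_t_one.
- have -> : sylv_t g 2 = g * g.+1 by rewrite -[2]/(1 + 1) sylv_t_shift // sylv_t_one.
  have [->|hg2] : g = 1 \/ 2 <= g by lia.
    by right; left.
  have : 6 <= g * g.+1 by nia.
  by lia.
- right; right; split; [lia | split; first lia].
  rewrite -(subnKC hk3) sylv_t_shift //; apply: leq_trans (pronic_iter_ge _ _).
  rewrite -[3]/(1 + 2) sylv_t_shift // sylv_t_one !pronic_iterS /pronic /=.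
  have : 2 <= g * g.+1 by nia.
  by nia.
Qed.

Lemma sylv_bound g c N j : 1 <= g -> 1 <= c <= 3 -> j < N ->
  (j = 1 -> c <= sylv_t g (N - j)) -> (j = 2 -> sylv_t g (N - j) = 1 -> c <= 2) ->
  (c + j) ^ j.+1 * sylv_t g (N - j) ^ j.+2 <= c * sylv_t g N ^ 2 /\
  ((c + j) ^ j.+1 * sylv_t g (N - j) ^ j.+2 = c * sylv_t g N ^ 2 <->
     j = 0 \/ (j = 1 /\ sylv_t g (N - j) = c)).
Proof.
move=> hg hc hjN h1 h2.
rewrite -[in sylv_t g N](subnK (ltnW hjN)) sylv_t_shift; last lia.
by apply: pronic_bound => //; apply: leq_trans hg (sylv_t_ge _ _).
Qed.

Lemma sylv_part1 g n : 1 <= g -> 3 <= n ->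
  forall r, 1 <= r <= n ->
    r ^ r * sylv_t g (n - r + 1) ^ r.+1 <= sylv_t g n ^ 2 /\
    (r ^ r * sylv_t g (n - r + 1) ^ r.+1 = sylv_t g n ^ 2 <-> r = 1).
Proof.
move=> hg hn [//|j] /andP [_ hjn].
rewrite (_ : n - j.+1 + 1 = n - j); last lia.
have hk : 0 < n - j by lia.
have cases := sylv_t_cases g (n - j) hg hk.
have [||hle heq] := sylv_bound g 1 n j hg isT hjn; try lia.
by rewrite mul1n in hle heq; split => //; apply: (iff_trans heq); lia.
Qed.

(* Part 2 (c = 2): the start t_{g,1} = 1 is excluded; equality for r = 1 or
   when t_{g,n-2} = 2, i.e. (g, n) = (2, 3) or (1, 4). *)
Lemma sylv_part2 g n : 1 <= g -> 3 <= n -> (n, g) <> (3, 1) ->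
  forall r, 1 <= r <= n - 1 ->
    r.+1 ^ r * sylv_t g (n - r) ^ r.+1 <= 2 * sylv_t g (n - 1) ^ 2 /\
    (r.+1 ^ r * sylv_t g (n - r) ^ r.+1 = 2 * sylv_t g (n - 1) ^ 2 <->
       r = 1 \/ (g, r, n) = (1, 2, 4) \/ (g, r, n) = (2, 2, 3)).
Proof.
move=> hg hn hex [//|j] /andP [_ hjn]; rewrite !pair_equal_spec in hex *.
rewrite (_ : n - j.+1 = n - 1 - j); last lia.
have hk : 0 < n - 1 - j by lia.
have cases := sylv_t_cases g (n - 1 - j) hg hk.
have [||hle heq] := sylv_bound g 2 (n - 1) j hg isT hjn; try lia.
by split => //; apply: (iff_trans heq); lia.
Qed.

(* Part 3 (c = 3): the starts t_{g,n-3} <= 2 at r = 2 and t_{g,n-4} = 1 at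
   r = 3 are excluded; equality for r = 1 or when t_{g,n-3} = 3, i.e.
   (g, n) = (3, 4). *)
Lemma sylv_part3 g n : 1 <= g -> 3 <= n ->
  ~ ((n, g) = (4, 1) \/ (n, g) = (4, 2) \/ (n, g) = (5, 1)) ->
  forall r, 1 <= r <= n - 2 ->
    r.+2 ^ r * sylv_t g (n - r - 1) ^ r.+1 <= 3 * sylv_t g (n - 2) ^ 2 /\
    (r.+2 ^ r * sylv_t g (n - r - 1) ^ r.+1 = 3 * sylv_t g (n - 2) ^ 2 <->
       r = 1 \/ (g, r, n) = (3, 2, 4)).
Proof.
move=> hg hn hex [//|j] /andP [_ hjn]; rewrite !pair_equal_spec in hex *.
rewrite (_ : n - j.+1 - 1 = n - 2 - j); last lia.
have hk : 0 < n - 2 - j by lia.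
have cases := sylv_t_cases g (n - 2 - j) hg hk.
have [||hle heq] := sylv_bound g 3 (n - 2) j hg isT hjn; try lia.
by split => //; apply: (iff_trans heq); lia.
Qed.

Theorem lemma3p11 (g n : nat) (hg : 1 <= g) (hn : 3 <= n) :
  (forall r, 1 <= r <= n ->
     r ^ r * sylv_t g (n - r + 1) ^ r.+1 <= sylv_t g n ^ 2 /\
     (r ^ r * sylv_t g (n - r + 1) ^ r.+1 = sylv_t g n ^ 2 <-> r = 1))
  /\
  ((n, g) <> (3, 1) ->
   forall r, 1 <= r <= n - 1 ->
     r.+1 ^ r * sylv_t g (n - r) ^ r.+1 <= 2 * sylv_t g (n - 1) ^ 2 /\
     (r.+1 ^ r * sylv_t g (n - r) ^ r.+1 = 2 * sylv_t g (n - 1) ^ 2 <->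
        r = 1 \/ (g, r, n) = (1, 2, 4) \/ (g, r, n) = (2, 2, 3)))
  /\
  (~ ((n, g) = (4, 1) \/ (n, g) = (4, 2) \/ (n, g) = (5, 1)) ->
   forall r, 1 <= r <= n - 2 ->
     r.+2 ^ r * sylv_t g (n - r - 1) ^ r.+1 <= 3 * sylv_t g (n - 2) ^ 2 /\
     (r.+2 ^ r * sylv_t g (n - r - 1) ^ r.+1 = 3 * sylv_t g (n - 2) ^ 2 <->
        r = 1 \/ (g, r, n) = (3, 2, 4))).
Proof.
split; [exact: sylv_part1 | split; [exact: sylv_part2 | exact: sylv_part3]].
Qed.
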